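(* Let $n\ge1$ be an integer and $x\in\{0,1,\dots,n\}$ an observed value of $X\sim B(n,p)$. For $\alpha\in(0,1)$ let $g(\alpha)$ be the posterior mean of $p$ under the triangle prior with mode $\alpha$ (density $\frac{2}{\alpha}p$ on $(0,\alpha]$ and $\frac{2}{1-\alpha}(1-p)$ on $(\alpha,1)$): $$g(\alpha)=\frac{\frac{2}{\alpha}\int_0^\alpha p^{x+2}(1-p)^{n-x}\,dp+\frac{2}{1-\alpha}\int_\alpha^1 p^{x+1}(1-p)^{n-x+1}\,dp}{\frac{2}{\alpha}\int_0^\alpha p^{x+1}(1-p)^{n-x}\,dp+\frac{2}{1-\alpha}\int_\alpha^1 p^{x}(1-p)^{n-x+1}\,dp},$$ and let $\hat p_{IB}(x)$ denote the unique $\tau\in(0,1)$ with $g(\tau)=\tau$. Then: (1) $\hat p_{IB}(x)$ is the unique real zero in the interval $(0,1)$ of the integer-coefficient polynomial $$J_n(a,x)=2a^{x+2}\sum_{r=0}^{n-x}\binom{n+3}{n-x-r}\binom{x+r}{r}(-1)^r a^r-(n-x+1)(n+3)a+(n-x+1)(x+1).$$ (2) $\frac{x+1}{n+3}<\hat p_{IB}(x)<\frac{x+2}{n+3}$ for $x=0,1,\dots,n$; more precisely, $\frac{x+1}{n+2}<\hat p_{IB}(x)<\frac{x+2}{n+3}$ for $x<\frac n2$, and $\frac{x+1}{n+3}<\hat p_{IB}(x)<\frac{x+1}{n+2}$ for $x>\frac n2$.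
   Context: $B(n,p)$ is the binomial distribution with $n$ trials and success probability $p\in(0,1)$. The fixed point $\hat p_{IB}(x)$ of $g$ in $(0,1)$ (the ''iterative Bayes estimate'') exists and is unique. *)

From Stdlib Require Import Reals Lra.
From Coquelicot Require Import Coquelicot.
Open Scope R_scope.

Definition g (n x : nat) (a : R) : R :=
  (2 / a * RInt (fun p => p ^ (x + 2) * (1 - p) ^ (n - x)) 0 a
   + 2 / (1 - a) * RInt (fun p => p ^ (x + 1) * (1 - p) ^ (n - x + 1)) a 1)
  /
  (2 / a * RInt (fun p => p ^ (x + 1) * (1 - p) ^ (n - x)) 0 a
   + 2 / (1 - a) * RInt (fun p => p ^ x * (1 - p) ^ (n - x + 1)) a 1).

Definition J (n x : nat) (a : R) : R :=
  2 * a ^ (x + 2) *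
    sum_f_R0 (fun r => Binomial.C (n + 3) (n - x - r) * Binomial.C (x + r) r * (-1) ^ r * a ^ r) (n - x)
  - INR (n - x + 1) * INR (n + 3) * a + INR (n - x + 1) * INR (x + 1).

(* Write n = x + m and w(p) = p^x (1-p)^m. Clearing the denominator of g turns g(a) = a into
   gap(a) = 0, where gap(a) = ∫_a^1 w(p)(1-p)(p-a)/(1-a) dp - ∫_0^a w(p) p (1-p/a) dp is strictly
   decreasing on (0,1); expanding (1-p)^m binomially shows J_n(a,x) = κ (1-a) gap(a) with κ > 0,
   which gives (1). For (2) it suffices to know the sign of gap at the three candidate bounds.
   Splitting the integrals differently,
     a(1-a) gap(a) = a (B(x+1,m+1) - a B(x,m+1)) + ∫_0^a w(p)(a-p)^2 dp
                   = (1-a) (B(x+2,m) - a B(x+1,m)) - ∫_a^1 w(p)(p-a)^2 dp,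
   and the beta brackets vanish at a = (x+1)/(n+3) and a = (x+2)/(n+3) respectively. At the mode
   c = (x+1)/(n+2) of ψ(q) = q^(x+1)(1-q)^(m+1) an integration by parts gives
   (n+2) gap(c) = ∫_0^1 ψ(ct) - ψ(1-(1-c)t) dt, whose sign is that of m - x. *)

From Stdlib Require Import Reals Lra Lia Factorial.
From Coquelicot Require Import Coquelicot.
Open Scope R_scope.

Ltac solve_continuous :=
  intros; apply (@ex_derive_continuous R_AbsRing R_NormedModule); auto_derive; auto.
Ltac solve_ex_RInt :=
  apply (@ex_RInt_continuous R_CompleteNormedModule); solve_continuous.

(* Coquelicot's versions are typed in an abstract normed module; restating them with equations
   in [R] lets [ring], [field] and [lra] act on the results. *)
Lemma RInt_scal_R (f : R -> R) (l a b : R) :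
  ex_RInt f a b -> RInt (fun p => l * f p) a b = l * RInt f a b :> R.
Proof. exact (RInt_scal f a b l). Qed.

Lemma RInt_ext_R (f g : R -> R) (a b : R) :
  (forall p, Rmin a b < p < Rmax a b -> f p = g p) -> RInt f a b = RInt g a b :> R.
Proof. exact (RInt_ext f g a b). Qed.

Lemma RInt_Chasles_R (f : R -> R) (a b c : R) :
  ex_RInt f a b -> ex_RInt f b c -> RInt f a b + RInt f b c = RInt f a c :> R.
Proof. exact (RInt_Chasles f a b c). Qed.

Lemma RInt_lincomb (f g : R -> R) (al be a b : R) :
  ex_RInt f a b -> ex_RInt g a b ->
  RInt (fun p => al * f p + be * g p) a b = al * RInt f a b + be * RInt g a b :> R.
Proof.
  intros Hf Hg.
  rewrite <- (RInt_scal_R f), <- (RInt_scal_R g) by assumption.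
  exact (RInt_plus _ _ a b (ex_RInt_scal f a b al Hf) (ex_RInt_scal g a b be Hg)).
Qed.

Lemma RInt_lincomb_open (f g h : R -> R) (al be a b : R) :
  ex_RInt g a b -> ex_RInt h a b ->
  (forall p, Rmin a b < p < Rmax a b -> f p = al * g p + be * h p) ->
  RInt f a b = al * RInt g a b + be * RInt h a b :> R.
Proof. intros Hg Hh Hf. rewrite <- RInt_lincomb by assumption. now apply RInt_ext_R. Qed.

Lemma is_RInt_antiderivative (F dF : R -> R) (a b v : R) :
  (forall p, is_derive F p (dF p)) -> (forall p, continuous dF p) ->
  F b - F a = v -> is_RInt dF a b v.
Proof. intros HF HdF <-. now apply (is_RInt_derive F dF). Qed.

Lemma is_RInt_sum_f_R0 (F : nat -> R -> R) (v : nat -> R) (a b : R) (N : nat) :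
  (forall r, (r <= N)%nat -> is_RInt (F r) a b (v r)) ->
  is_RInt (fun p => sum_f_R0 (fun r => F r p) N) a b (sum_f_R0 v N).
Proof.
  induction N as [|N IH]; intros H; simpl.
  - now apply H.
  - apply (is_RInt_plus (V:=R_NormedModule)).
    + apply IH. intros r Hr. apply H. lia.
    + apply H. lia.
Qed.

Lemma RInt_comp_affine (f : R -> R) (u v : R) :
  u <> 0 -> ex_RInt f v (u + v) ->
  RInt f v (u + v) = u * RInt (fun t => f (u * t + v)) 0 1 :> R.
Proof.
  intros Hu Hf.
  assert (H := RInt_correct f v (u + v) Hf).
  rewrite <- (Rplus_0_l v) in H at 1. rewrite <- (Rmult_0_r u) in H at 1.
  rewrite <- (Rmult_1_r u) in H at 2.
  apply (is_RInt_comp_lin f), (is_RInt_scal _ _ _ (/ u)) in H.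
  assert (E : RInt (fun t => f (u * t + v)) 0 1 = / u * RInt f v (u + v)).
  { apply is_RInt_unique. eapply is_RInt_ext; [|exact H].
    intros t _. cbv [scal]; simpl; cbv [mult]; simpl. now field. }
  rewrite E, <- Rmult_assoc, Rinv_r, Rmult_1_l by exact Hu. reflexivity.
Qed.

Lemma RInt_rescale_0 (f : R -> R) (c : R) : c <> 0 -> ex_RInt f 0 c ->
  RInt f 0 c = c * RInt (fun t => f (c * t)) 0 1 :> R.
Proof.
  intros Hc Hf. rewrite <- (Rplus_0_r c) at 1.
  rewrite RInt_comp_affine by (rewrite ?Rplus_0_r; assumption).
  f_equal. apply RInt_ext_R. intros t _. now rewrite Rplus_0_r.
Qed.

Lemma RInt_rescale_1 (f : R -> R) (c : R) : c <> 1 -> ex_RInt f c 1 ->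
  RInt f c 1 = (1 - c) * RInt (fun t => f (1 - (1 - c) * t)) 0 1 :> R.
Proof.
  intros Hc Hf.
  assert (H := RInt_comp_affine f (- (1 - c)) 1).
  replace (- (1 - c) + 1) with c in H by ring.
  rewrite <- (opp_RInt_swap f 1 c), H by (lra || now apply ex_RInt_swap).
  change (- (- (1 - c) * RInt (fun t => f (- (1 - c) * t + 1)) 0 1)
          = (1 - c) * RInt (fun t => f (1 - (1 - c) * t)) 0 1).
  rewrite (RInt_ext_R (fun t => f (- (1 - c) * t + 1)) (fun t => f (1 - (1 - c) * t)))
    by (intros t _; f_equal; ring).
  ring.
Qed.

Lemma derive_neg_decr (f df : R -> R) (a b : R) :
  a < b -> (forall t, a <= t <= b -> is_derive f t (df t)) ->
  (forall t, a < t < b -> df t < 0) -> f b < f a.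
Proof.
  intros Hab Hd Hneg.
  destruct (MVT_cor2 f df a b Hab) as [c [E Hc]].
  { intros t Ht. apply is_derive_Reals, Hd, Ht. }
  specialize (Hneg c Hc). nra.
Qed.

Lemma weight_pos (k l : nat) (p : R) : 0 < p < 1 -> 0 < p ^ k * (1 - p) ^ l.
Proof. intros Hp. apply Rmult_lt_0_compat; apply pow_lt; lra. Qed.

Lemma ratio_in_01 (k n : nat) : (0 < k)%nat -> (k < n)%nat -> 0 < INR k / INR n < 1.
Proof.
  intros Hk Hkn.
  assert (0 < INR k) by (apply lt_0_INR; lia).
  assert (INR k < INR n) by (apply lt_INR; lia).
  split; [apply Rdiv_lt_0_compat; lra|].
  apply (Rmult_lt_reg_r (INR n)); [lra|]. field_simplify; lra.
Qed.

Definition beta (k l : nat) : R := RInt (fun p => p ^ k * (1 - p) ^ l) 0 1.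

Lemma beta_shift (k l : nat) : INR (k + 1) * beta k (l + 1) = INR (l + 1) * beta (k + 1) l.
Proof.
  assert (H : is_RInt (fun p => INR (k + 1) * (p ^ k * (1 - p) ^ (l + 1))
                               + - INR (l + 1) * (p ^ (k + 1) * (1 - p) ^ l)) 0 1 0).
  { apply (is_RInt_antiderivative (fun p => p ^ (k + 1) * (1 - p) ^ (l + 1))).
    - intros p. auto_derive; auto.
      rewrite !Nat.add_1_r. cbn [Init.Nat.pred pow]. unfold Rminus. ring.
    - solve_continuous.
    - rewrite !Nat.add_1_r. cbn [pow]. ring. }
  apply (is_RInt_unique (V:=R_CompleteNormedModule)) in H.
  rewrite RInt_lincomb in H by solve_ex_RInt. unfold beta. lra.
Qed.

Lemma beta_fact (k l : nat) : beta k l = INR (fact k) * INR (fact l) / INR (fact (k + l + 1)).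
Proof.
  revert k. induction l as [|l IH]; intros k.
  - assert (Hk : INR (S k) <> 0) by (apply not_0_INR; lia).
    unfold beta. apply (is_RInt_unique (V:=R_CompleteNormedModule)).
    apply (is_RInt_antiderivative (fun p => p ^ S k / INR (S k))).
    + intros p. auto_derive; auto. cbn [Init.Nat.pred pow]. now field.
    + solve_continuous.
    + rewrite Nat.add_0_r, Nat.add_1_r, fact_simpl, mult_INR. cbn [pow fact INR].
      rewrite pow1. field. split; [apply INR_fact_neq_0 | exact Hk].
  - assert (Hk : INR (k + 1) <> 0) by (apply not_0_INR; lia).
    apply (Rmult_eq_reg_l (INR (k + 1))); [|exact Hk].
    replace (S l) with (l + 1)%nat by lia.
    rewrite beta_shift, IH.
    replace (k + 1 + l + 1)%nat with (S (S (k + l))) by lia.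
    replace (k + (l + 1) + 1)%nat with (S (S (k + l))) by lia.
    rewrite !Nat.add_1_r, !fact_simpl, !mult_INR.
    field. repeat split; first [apply INR_fact_neq_0 | apply not_0_INR; lia].
Qed.

Lemma beta_succ_l (k l : nat) : beta (k + 1) l = INR (k + 1) / INR (k + l + 2) * beta k l.
Proof.
  rewrite !beta_fact.
  replace (k + 1 + l + 1)%nat with (S (k + l + 1)) by lia.
  replace (k + l + 2)%nat with (S (k + l + 1)) by lia.
  replace (k + 1)%nat with (S k) by lia. rewrite !fact_simpl, !mult_INR.
  field. repeat split; first [apply INR_fact_neq_0 | apply not_0_INR; lia].
Qed.

Lemma RInt_weight_affine (k l : nat) (a u v : R) :
  RInt (fun p => p ^ k * (1 - p) ^ l * (p - a)) u v
  = RInt (fun p => p ^ (k + 1) * (1 - p) ^ l) u v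
    - a * RInt (fun p => p ^ k * (1 - p) ^ l) u v :> R.
Proof.
  rewrite (RInt_lincomb_open _ (fun p => p ^ (k + 1) * (1 - p) ^ l) (fun p => p ^ k * (1 - p) ^ l)
             1 (- a)); [ring | solve_ex_RInt | solve_ex_RInt |].
  intros p _. rewrite Nat.add_1_r. cbn [pow]. ring.
Qed.

(* [(g (x + m) x a - a)] times half the denominator of [g]. *)
Definition gap (x m : nat) (a : R) : R :=
  RInt (fun p => p ^ x * (1 - p) ^ (m + 1) * ((p - a) / (1 - a))) a 1
  - RInt (fun p => p ^ (x + 1) * (1 - p) ^ m * (1 - p / a)) 0 a.

Lemma gap_scaled (x m : nat) (a : R) : 0 < a < 1 ->
  a * (1 - a) * gap x m a =
  a * RInt (fun p => p ^ x * (1 - p) ^ (m + 1) * (p - a)) a 1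
  + (1 - a) * RInt (fun p => p ^ (x + 1) * (1 - p) ^ m * (p - a)) 0 a.
Proof.
  intros Ha. unfold gap.
  rewrite <- !RInt_scal_R by solve_ex_RInt.
  rewrite (RInt_ext_R (fun p => _ * ((p - a) / (1 - a)))
             (fun p => / (1 - a) * (p ^ x * (1 - p) ^ (m + 1) * (p - a)))) by (intros; field; lra).
  rewrite (RInt_ext_R (fun p => _ * (1 - p / a))
             (fun p => - / a * (p ^ (x + 1) * (1 - p) ^ m * (p - a)))) by (intros; field; lra).
  rewrite !RInt_scal_R by solve_ex_RInt. field. lra.
Qed.

Lemma g_fixed_iff (x m : nat) (a : R) : 0 < a < 1 -> g (x + m) x a = a <-> gap x m a = 0.
Proof.
  intros Ha. unfold g. replace (x + m - x)%nat with m by lia.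
  set (num := _ + _ * RInt (fun p => p ^ (x + 1) * (1 - p) ^ (m + 1)) a 1).
  set (den := _ + _ * RInt (fun p => p ^ x * (1 - p) ^ (m + 1)) a 1).
  assert (Hden : 0 < den).
  { assert (0 < RInt (fun p => p ^ (x + 1) * (1 - p) ^ m) 0 a).
    { apply RInt_gt_0; [lra | intros; apply weight_pos; lra | solve_continuous]. }
    assert (0 < RInt (fun p => p ^ x * (1 - p) ^ (m + 1)) a 1).
    { apply RInt_gt_0; [lra | intros; apply weight_pos; lra | solve_continuous]. }
    unfold den. apply Rplus_lt_0_compat; apply Rmult_lt_0_compat; try assumption;
      apply Rdiv_lt_0_compat; lra. }
  assert (Hnum : num - a * den = 2 * gap x m a).
  { apply (Rmult_eq_reg_l (a * (1 - a))); [|nra].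
    replace (a * (1 - a) * (2 * gap x m a)) with (2 * (a * (1 - a) * gap x m a)) by ring.
    rewrite gap_scaled by exact Ha.
    rewrite !RInt_weight_affine. replace (x + 1 + 1)%nat with (x + 2)%nat by lia.
    unfold num, den. field. lra. }
  assert (Hg : num / den - a = 2 / den * gap x m a).
  { replace (2 / den * gap x m a) with (2 * gap x m a / den) by (field; lra).
    rewrite <- Hnum. field. lra. }
  assert (Hpos : 0 < 2 / den) by (apply Rdiv_lt_0_compat; lra).
  split; intros H; rewrite H in Hg; nra.
Qed.

Lemma gap_decr (x m : nat) (a b : R) : 0 < a -> a < b -> b < 1 -> gap x m b < gap x m a.
Proof.
  intros Ha Hab Hb. unfold gap.
  assert (Hleft : RInt (fun p => p ^ (x + 1) * (1 - p) ^ m * (1 - p / a)) 0 a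
                  < RInt (fun p => p ^ (x + 1) * (1 - p) ^ m * (1 - p / b)) 0 b).
  { rewrite <- (RInt_Chasles_R _ 0 a b) by solve_ex_RInt.
    assert (0 < RInt (fun p => p ^ (x + 1) * (1 - p) ^ m * (1 - p / b)) a b).
    { apply RInt_gt_0; [lra | | solve_continuous].
      intros p Hp. apply Rmult_lt_0_compat; [apply weight_pos; lra|].
      apply Rlt_0_minus, (Rmult_lt_reg_r b); [lra|]. field_simplify; lra. }
    assert (RInt (fun p => p ^ (x + 1) * (1 - p) ^ m * (1 - p / a)) 0 a
            <= RInt (fun p => p ^ (x + 1) * (1 - p) ^ m * (1 - p / b)) 0 a).
    { apply RInt_le; [lra | solve_ex_RInt | solve_ex_RInt |].
      intros p Hp. apply Rmult_le_compat_l; [left; apply weight_pos; lra|].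
      apply Rplus_le_compat_l, Ropp_le_contravar, Rmult_le_compat_l; [lra|].
      apply Rinv_le_contravar; lra. }
    lra. }
  assert (Hright : RInt (fun p => p ^ x * (1 - p) ^ (m + 1) * ((p - b) / (1 - b))) b 1
                   <= RInt (fun p => p ^ x * (1 - p) ^ (m + 1) * ((p - a) / (1 - a))) a 1).
  { rewrite <- (RInt_Chasles_R _ a b 1) by solve_ex_RInt.
    assert (0 <= RInt (fun p => p ^ x * (1 - p) ^ (m + 1) * ((p - a) / (1 - a))) a b).
    { apply RInt_ge_0; [lra | solve_ex_RInt |].
      intros p Hp. apply Rmult_le_pos; [left; apply weight_pos; lra|].
      apply Rdiv_le_0_compat; lra. }
    assert (RInt (fun p => p ^ x * (1 - p) ^ (m + 1) * ((p - b) / (1 - b))) b 1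
            <= RInt (fun p => p ^ x * (1 - p) ^ (m + 1) * ((p - a) / (1 - a))) b 1).
    { apply RInt_le; [lra | solve_ex_RInt | solve_ex_RInt |].
      intros p Hp. apply Rmult_le_compat_l; [left; apply weight_pos; lra|].
      apply (Rmult_le_reg_r ((1 - a) * (1 - b))); [apply Rmult_lt_0_compat; lra|].
      field_simplify; nra. }
    lra. }
  lra.
Qed.

Definition left_sq (x m : nat) (a : R) : R :=
  RInt (fun p => p ^ x * (1 - p) ^ m * (a - p) ^ 2) 0 a.

Definition right_sq (x m : nat) (a : R) : R :=
  RInt (fun p => p ^ x * (1 - p) ^ m * (p - a) ^ 2) a 1.

Lemma gap_left (x m : nat) (a : R) : 0 < a < 1 ->
  a * (1 - a) * gap x m a = a * (beta (x + 1) (m + 1) - a * beta x (m + 1)) + left_sq x m a.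
Proof.
  intros Ha. rewrite gap_scaled by exact Ha.
  unfold beta. rewrite <- RInt_weight_affine.
  rewrite <- (RInt_Chasles_R _ 0 a 1) by solve_ex_RInt.
  rewrite (RInt_lincomb_open (fun p => p ^ (x + 1) * (1 - p) ^ m * (p - a))
             (fun p => p ^ x * (1 - p) ^ m * (a - p) ^ 2) (fun p => p ^ x * (1 - p) ^ (m + 1) * (p - a))
             (/ (1 - a)) (a / (1 - a)));
    [unfold left_sq; field; lra | solve_ex_RInt | solve_ex_RInt |].
  intros p _. replace (x + 1)%nat with (S x) by lia. replace (m + 1)%nat with (S m) by lia.
  cbn [pow]. field. lra.
Qed.

Lemma gap_right (x m : nat) (a : R) : 0 < a < 1 ->
  a * (1 - a) * gap x m a = (1 - a) * (beta (x + 2) m - a * beta (x + 1) m) - right_sq x m a.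
Proof.
  intros Ha. rewrite gap_scaled by exact Ha.
  replace (x + 2)%nat with (x + 1 + 1)%nat by lia.
  unfold beta. rewrite <- RInt_weight_affine.
  rewrite <- (RInt_Chasles_R _ 0 a 1) by solve_ex_RInt.
  rewrite (RInt_lincomb_open (fun p => p ^ x * (1 - p) ^ (m + 1) * (p - a))
             (fun p => p ^ x * (1 - p) ^ m * (p - a) ^ 2) (fun p => p ^ (x + 1) * (1 - p) ^ m * (p - a))
             (- / a) ((1 - a) / a));
    [unfold right_sq; field; lra | solve_ex_RInt | solve_ex_RInt |].
  intros p _. replace (x + 1)%nat with (S x) by lia. replace (m + 1)%nat with (S m) by lia.
  cbn [pow]. field. lra.
Qed.

Lemma is_RInt_monomial_sq (k : nat) (a : R) :
  is_RInt (fun p => p ^ k * (a - p) ^ 2) 0 a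
    (2 * a ^ (k + 3) / (INR (k + 1) * INR (k + 2) * INR (k + 3))).
Proof.
  assert (H1 : INR (S k) <> 0) by (apply not_0_INR; lia).
  assert (H2 : INR (S (S k)) <> 0) by (apply not_0_INR; lia).
  assert (H3 : INR (S (S (S k))) <> 0) by (apply not_0_INR; lia).
  replace (k + 1)%nat with (S k) by lia. replace (k + 2)%nat with (S (S k)) by lia.
  replace (k + 3)%nat with (S (S (S k))) by lia.
  apply (is_RInt_antiderivative (fun p => a ^ 2 * p ^ S k / INR (S k)
           - 2 * a * p ^ S (S k) / INR (S (S k)) + p ^ S (S (S k)) / INR (S (S (S k))))).
  - intros p. auto_derive; auto. cbn [Init.Nat.pred pow].
    change (match k with 0%nat => 1 | S _ => INR k + 1 end) with (INR (S k)).
    rewrite !S_INR in *. field. lra.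
  - solve_continuous.
  - cbn [pow]. rewrite !Rmult_0_l. rewrite !S_INR in *. field. lra.
Qed.

Lemma weight_sq_binomial (x m : nat) (a p : R) :
  p ^ x * (1 - p) ^ m * (a - p) ^ 2
  = sum_f_R0 (fun r => Binomial.C m r * (-1) ^ r * (p ^ (x + r) * (a - p) ^ 2)) m.
Proof.
  replace (1 - p) with (- p + 1) by ring. rewrite binomial.
  match goal with |- ?u * ?s * ?v = _ => replace (u * s * v) with (u * v * s) by ring end.
  rewrite scal_sum. apply sum_eq. intros i _.
  replace (- p) with (-1 * p) by ring. rewrite pow1, pow_add, Rpow_mult_distr. ring.
Qed.

Lemma left_sq_poly (x m : nat) (a : R) : left_sq x m a =
  sum_f_R0 (fun r => Binomial.C m r * (-1) ^ r
                     * (2 * a ^ (x + r + 3) / (INR (x + r + 1) * INR (x + r + 2) * INR (x + r + 3)))) m.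
Proof.
  apply (is_RInt_unique (V:=R_CompleteNormedModule)).
  apply (is_RInt_ext (V:=R_NormedModule)
           (fun p => sum_f_R0 (fun r => Binomial.C m r * (-1) ^ r * (p ^ (x + r) * (a - p) ^ 2)) m)).
  { intros p _. symmetry. apply weight_sq_binomial. }
  apply is_RInt_sum_f_R0. intros r _.
  apply (is_RInt_scal (V:=R_NormedModule) (fun p => p ^ (x + r) * (a - p) ^ 2)).
  apply is_RInt_monomial_sq.
Qed.

Definition J_scale (x m : nat) : R := INR (fact (x + m + 3)) / (INR (fact x) * INR (fact m)).

Lemma J_scale_pos (x m : nat) : 0 < J_scale x m.
Proof.
  unfold J_scale. apply Rdiv_lt_0_compat; [|apply Rmult_lt_0_compat]; apply lt_0_INR, lt_O_fact.
Qed.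

Lemma J_scale_beta (x m : nat) : J_scale x m * beta x (m + 1) = INR (m + 1) * INR (x + m + 3).
Proof.
  unfold J_scale. rewrite beta_fact.
  replace (x + (m + 1) + 1)%nat with (S (S (x + m))) by lia.
  replace (x + m + 3)%nat with (S (S (S (x + m)))) by lia.
  rewrite !Nat.add_1_r, !fact_simpl, !mult_INR.
  field. repeat split; first [apply INR_fact_neq_0 | apply not_0_INR; lia].
Qed.

Lemma J_term (x m r : nat) (a : R) : (r <= m)%nat ->
  Binomial.C (x + m + 3) (m - r) * Binomial.C (x + r) r * (-1) ^ r * a ^ r * (2 * a ^ (x + 2)) * a
  = J_scale x m * (Binomial.C m r * (-1) ^ r
                   * (2 * a ^ (x + r + 3) / (INR (x + r + 1) * INR (x + r + 2) * INR (x + r + 3)))).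
Proof.
  intros Hr. unfold J_scale, Binomial.C.
  replace (x + m + 3 - (m - r))%nat with (S (S (S (x + r)))) by lia.
  replace (x + r - r)%nat with x by lia.
  replace (x + r + 1)%nat with (S (x + r)) by lia.
  replace (x + r + 2)%nat with (S (S (x + r))) by lia.
  replace (x + r + 3)%nat with (S (S (S (x + r)))) by lia.
  rewrite !fact_simpl. cbn [pow]. rewrite !pow_add. cbn [pow].
  rewrite !mult_INR, !S_INR.
  pose proof (pos_INR (x + r)).
  field. repeat split; try apply INR_fact_neq_0; lra.
Qed.

Lemma J_sum_left_sq (x m : nat) (a : R) :
  a * (2 * a ^ (x + 2) * sum_f_R0 (fun r => Binomial.C (x + m + 3) (m - r) * Binomial.C (x + r) r
                                            * (-1) ^ r * a ^ r) m)
  = J_scale x m * left_sq x m a.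
Proof.
  rewrite left_sq_poly.
  replace (a * (2 * a ^ (x + 2) * _)) with (2 * a ^ (x + 2) * a * sum_f_R0
    (fun r => Binomial.C (x + m + 3) (m - r) * Binomial.C (x + r) r * (-1) ^ r * a ^ r) m) by ring.
  rewrite !scal_sum. apply sum_eq. intros r Hr.
  rewrite (Rmult_comm _ (J_scale x m)), <- J_term by exact Hr. ring.
Qed.

Lemma J_eq_gap (x m : nat) (a : R) : 0 < a < 1 ->
  J (x + m) x a = J_scale x m * (1 - a) * gap x m a.
Proof.
  intros Ha. apply (Rmult_eq_reg_l a); [|lra].
  replace (a * (J_scale x m * (1 - a) * gap x m a))
    with (J_scale x m * (a * (1 - a) * gap x m a)) by ring.
  rewrite gap_left, beta_succ_l by exact Ha.
  replace (x + (m + 1) + 2)%nat with (x + m + 3)%nat by lia.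
  unfold J. replace (x + m - x + 1)%nat with (m + 1)%nat by lia.
  replace (x + m - x)%nat with m by lia.
  set (P := 2 * a ^ (x + 2) * _).
  replace (a * (P - _ + _)) with (a * P - a * (INR (m + 1) * INR (x + m + 3)) * a
                                   + a * (INR (m + 1) * INR (x + 1))) by ring.
  unfold P. rewrite J_sum_left_sq.
  set (B := beta x (m + 1)).
  replace (J_scale x m * (a * (_ - a * B) + left_sq x m a)) with (J_scale x m * left_sq x m a
    + a * (INR (x + 1) / INR (x + m + 3)) * (J_scale x m * B) - a * a * (J_scale x m * B)) by ring.
  unfold B. rewrite J_scale_beta. field. apply not_0_INR. lia.
Qed.

Lemma left_sq_pos (x m : nat) (a : R) : 0 < a < 1 -> 0 < left_sq x m a.
Proof.
  intros Ha. apply RInt_gt_0; [lra | | solve_continuous].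
  intros p Hp. apply Rmult_lt_0_compat; [apply weight_pos | apply pow_lt]; lra.
Qed.

Lemma right_sq_pos (x m : nat) (a : R) : 0 < a < 1 -> 0 < right_sq x m a.
Proof.
  intros Ha. apply RInt_gt_0; [lra | | solve_continuous].
  intros p Hp. apply Rmult_lt_0_compat; [apply weight_pos | apply pow_lt]; lra.
Qed.

Lemma gap_pos_lower (x m : nat) : 0 < gap x m (INR (x + 1) / INR (x + m + 3)).
Proof.
  set (c := INR (x + 1) / INR (x + m + 3)).
  assert (Hc : 0 < c < 1) by (apply ratio_in_01; lia).
  assert (H := gap_left x m c Hc).
  rewrite beta_succ_l in H. replace (x + (m + 1) + 2)%nat with (x + m + 3)%nat in H by lia.
  fold c in H. rewrite Rminus_diag, Rmult_0_r, Rplus_0_l in H.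
  pose proof (left_sq_pos x m c Hc).
  apply (Rmult_lt_reg_l (c * (1 - c))); nra.
Qed.

Lemma gap_neg_upper (x m : nat) : gap x m (INR (x + 2) / INR (x + m + 3)) < 0.
Proof.
  set (c := INR (x + 2) / INR (x + m + 3)).
  assert (Hc : 0 < c < 1) by (apply ratio_in_01; lia).
  assert (H := gap_right x m c Hc).
  replace (x + 2)%nat with (x + 1 + 1)%nat in H by lia.
  rewrite beta_succ_l in H. replace (x + 1 + m + 2)%nat with (x + m + 3)%nat in H by lia.
  replace (x + 1 + 1)%nat with (x + 2)%nat in H by lia.
  fold c in H. rewrite Rminus_diag, Rmult_0_r, Rminus_0_l in H.
  pose proof (right_sq_pos x m c Hc).
  apply (Rmult_lt_reg_l (c * (1 - c))); nra.
Qed.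

(* [(M - X) (ln φ(c t) - ln φ(1 - (1 - c) t))] for [φ(q) = q^X (1 - q)^M] with mode
   [c = X / (X + M)]. *)
Definition skew (X M t : R) : R :=
  let c := X / (X + M) in
  (M - X) * (X * ln (c * t) + M * ln (1 - c * t) - X * ln (1 - (1 - c) * t) - M * ln ((1 - c) * t)).

Lemma skew_derive (X M t : R) : 0 < X -> 0 < M -> 0 < t <= 1 ->
  is_derive (skew X M) t
    (- (M - X) ^ 2 * (X + M) ^ 2 * (1 - t) / (t * (X + M - M * t) * (X + M - X * t))).
Proof.
  intros HX HM Ht. unfold skew.
  assert (0 < X + M - M * t) by nra.
  assert (0 < X + M - X * t) by nra.
  assert (E1 : X / (X + M) * t = X * t / (X + M)) by (field; lra).
  assert (E2 : 1 + - (X / (X + M) * t) = (X + M - X * t) / (X + M)) by (field; lra).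
  assert (E3 : 1 + - ((1 - X / (X + M)) * t) = (X + M - M * t) / (X + M)) by (field; lra).
  assert (E4 : (1 - X / (X + M)) * t = M * t / (X + M)) by (field; lra).
  auto_derive; rewrite E2, E3, E1, E4.
  - repeat split; apply Rdiv_lt_0_compat; nra.
  - field. repeat split; lra.
Qed.

Lemma skew_pos (X M t : R) : 0 < X -> 0 < M -> X <> M -> 0 < t < 1 -> 0 < skew X M t.
Proof.
  intros HX HM HXM Ht.
  assert (Hend : skew X M 1 = 0).
  { unfold skew. rewrite !Rmult_1_r. replace (1 - (1 - X / (X + M))) with (X / (X + M)) by ring. ring. }
  rewrite <- Hend.
  apply (derive_neg_decr (skew X M)
           (fun s => - (M - X) ^ 2 * (X + M) ^ 2 * (1 - s) / (s * (X + M - M * s) * (X + M - X * s)))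
           t 1); [lra | intros s Hs; apply skew_derive; lra |].
  intros s Hs.
  assert (Hn : 0 < (M - X) ^ 2 * (X + M) ^ 2 * (1 - s)).
  { apply Rmult_lt_0_compat; [apply Rmult_lt_0_compat; apply pow2_gt_0 | ]; lra. }
  assert (Hd : 0 < s * (X + M - M * s) * (X + M - X * s)) by (repeat apply Rmult_lt_0_compat; nra).
  pose proof (Rdiv_lt_0_compat _ _ Hn Hd).
  unfold Rdiv in *. rewrite !Ropp_mult_distr_l_reverse. lra.
Qed.


Definition psi (x m : nat) (q : R) : R := q ^ (x + 1) * (1 - q) ^ (m + 1).

Section Mode.

Variables x m : nat.

Let c := INR (x + 1) / INR (x + m + 2).

Lemma mode_in_01 : 0 < c < 1.
Proof. apply ratio_in_01; lia. Qed.

Lemma psi_mode_cmp (t : R) : 0 < t < 1 ->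
  ((x < m)%nat -> psi x m (1 - (1 - c) * t) < psi x m (c * t)) /\
  ((m < x)%nat -> psi x m (c * t) < psi x m (1 - (1 - c) * t)).
Proof.
  intros Ht.
  set (X := INR (x + 1)). set (M := INR (m + 1)).
  assert (HX : 0 < X) by (apply lt_0_INR; lia).
  assert (HM : 0 < M) by (apply lt_0_INR; lia).
  assert (Ec : c = X / (X + M)) by (unfold c, X, M; f_equal; rewrite <- plus_INR; f_equal; lia).
  pose proof mode_in_01 as Hc.
  assert (ln_psi : forall q, 0 < q < 1 -> ln (psi x m q) = X * ln q + M * ln (1 - q)).
  { intros q Hq. unfold psi. rewrite ln_mult, !ln_pow by (try apply pow_lt; lra). reflexivity. }
  assert (Hskew : skew X M t
                  = (M - X) * (ln (psi x m (c * t)) - ln (psi x m (1 - (1 - c) * t)))).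
  { unfold skew. rewrite <- Ec, !ln_psi by (split; nra).
    replace (1 - (1 - (1 - c) * t)) with ((1 - c) * t) by ring. ring. }
  assert (Hp1 : 0 < psi x m (c * t)) by (apply weight_pos; split; nra).
  assert (Hp2 : 0 < psi x m (1 - (1 - c) * t)) by (apply weight_pos; split; nra).
  split; intros Hxm.
  - assert (X < M) by (apply lt_INR; lia).
    pose proof (skew_pos X M t HX HM ltac:(lra) Ht). apply ln_lt_inv; nra.
  - assert (M < X) by (apply lt_INR; lia).
    pose proof (skew_pos X M t HX HM ltac:(lra) Ht). apply ln_lt_inv; nra.
Qed.

(* Since [c] is the mode of [psi x m], the derivative of [(c - p) psi(p)] is
   [(x + m + 2) p^x (1 - p)^m (c - p)^2 - psi(p)]. *)
Lemma is_RInt_psi (a b : R) :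
  is_RInt (fun p => INR (x + m + 2) * (p ^ x * (1 - p) ^ m * (c - p) ^ 2) + -1 * psi x m p) a b
    ((c - b) * psi x m b - (c - a) * psi x m a).
Proof.
  assert (HN : INR (x + m + 2) <> 0) by (apply not_0_INR; lia).
  apply (is_RInt_antiderivative (fun p => (c - p) * psi x m p));
    [| unfold psi; solve_continuous | reflexivity].
  intros p. unfold psi, c. auto_derive; auto.
  rewrite !Nat.add_1_r in *. cbn [Init.Nat.pred pow].
  change (match x with 0%nat => 1 | S _ => INR x + 1 end) with (INR (S x)).
  change (match m with 0%nat => 1 | S _ => INR m + 1 end) with (INR (S m)).
  rewrite !S_INR, !plus_INR, !S_INR in *. simpl (INR 1) in *. change (INR 0) with 0 in *.
  unfold Rminus. field. lra.
Qed.

Lemma left_sq_mode : INR (x + m + 2) * left_sq x m c = RInt (psi x m) 0 c.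
Proof.
  pose proof (is_RInt_psi 0 c) as H.
  apply (is_RInt_unique (V:=R_CompleteNormedModule)) in H.
  rewrite RInt_lincomb in H by (unfold psi; solve_ex_RInt).
  replace ((c - c) * psi x m c - (c - 0) * psi x m 0) with 0 in H
    by (unfold psi; rewrite Nat.add_1_r; cbn [pow]; ring).
  unfold left_sq. lra.
Qed.

Lemma right_sq_mode : INR (x + m + 2) * right_sq x m c = RInt (psi x m) c 1.
Proof.
  pose proof (is_RInt_psi c 1) as H.
  apply (is_RInt_unique (V:=R_CompleteNormedModule)) in H.
  rewrite RInt_lincomb in H by (unfold psi; solve_ex_RInt).
  replace ((c - 1) * psi x m 1 - (c - c) * psi x m c) with 0 in H
    by (unfold psi; rewrite (Nat.add_1_r m); cbn [pow]; ring).
  unfold right_sq.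
  rewrite (RInt_ext_R (fun p => p ^ x * (1 - p) ^ m * (p - c) ^ 2)
             (fun p => p ^ x * (1 - p) ^ m * (c - p) ^ 2)) by (intros; ring).
  lra.
Qed.

Lemma beta_mode_brackets :
  (beta (x + 1) (m + 1) - c * beta x (m + 1)) + (beta (x + 2) m - c * beta (x + 1) m) = 0.
Proof.
  rewrite beta_succ_l. replace (x + 2)%nat with (x + 1 + 1)%nat by lia. rewrite beta_succ_l.
  assert (E : beta x (m + 1) = INR (m + 1) / INR (x + 1) * beta (x + 1) m).
  { apply (Rmult_eq_reg_l (INR (x + 1))); [|apply not_0_INR; lia].
    rewrite beta_shift. field. apply not_0_INR. lia. }
  rewrite E. unfold c.
  replace (x + (m + 1) + 2)%nat with (x + m + 3)%nat by lia.
  replace (x + 1 + m + 2)%nat with (x + m + 3)%nat by lia.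
  rewrite !plus_INR. simpl (INR 1). simpl (INR 2). simpl (INR 3).
  pose proof (pos_INR x). pose proof (pos_INR m).
  field. lra.
Qed.

Lemma gap_mode :
  INR (x + m + 2) * gap x m c
  = RInt (fun t => psi x m (c * t)) 0 1 - RInt (fun t => psi x m (1 - (1 - c) * t)) 0 1.
Proof.
  pose proof mode_in_01 as Hc.
  apply (Rmult_eq_reg_l (c * (1 - c))); [|nra].
  transitivity (INR (x + m + 2)
                * ((1 - c) * (c * (1 - c) * gap x m c) + c * (c * (1 - c) * gap x m c))); [ring|].
  rewrite (gap_left x m c Hc) at 1. rewrite (gap_right x m c Hc).
  transitivity (INR (x + m + 2) * c * (1 - c)
                * ((beta (x + 1) (m + 1) - c * beta x (m + 1)) + (beta (x + 2) m - c * beta (x + 1) m))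
                + (1 - c) * (INR (x + m + 2) * left_sq x m c) - c * (INR (x + m + 2) * right_sq x m c));
    [ring|].
  rewrite beta_mode_brackets, left_sq_mode, right_sq_mode.
  rewrite (RInt_rescale_0 (psi x m) c), (RInt_rescale_1 (psi x m) c)
    by (lra || (unfold psi; solve_ex_RInt)).
  ring.
Qed.

Lemma gap_mode_sign :
  ((x < m)%nat -> 0 < gap x m c) /\ ((m < x)%nat -> gap x m c < 0).
Proof.
  pose proof gap_mode as H. pose proof mode_in_01 as Hc.
  assert (HN : 0 < INR (x + m + 2)) by (apply lt_0_INR; lia).
  split; intros Hxm.
  - assert (RInt (fun t => psi x m (1 - (1 - c) * t)) 0 1 < RInt (fun t => psi x m (c * t)) 0 1).
    { apply RInt_lt; [lra | unfold psi; solve_continuous | unfold psi; solve_continuous |].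
      intros t Ht. now apply psi_mode_cmp. }
    apply (Rmult_lt_reg_l (INR (x + m + 2))); lra.
  - assert (RInt (fun t => psi x m (c * t)) 0 1 < RInt (fun t => psi x m (1 - (1 - c) * t)) 0 1).
    { apply RInt_lt; [lra | unfold psi; solve_continuous | unfold psi; solve_continuous |].
      intros t Ht. now apply psi_mode_cmp. }
    apply (Rmult_lt_reg_l (INR (x + m + 2))); lra.
Qed.

End Mode.

Lemma gap_root_unique (x m : nat) (a b : R) : 0 < a < 1 -> 0 < b < 1 ->
  gap x m a = 0 -> gap x m b = 0 -> a = b.
Proof.
  intros Ha Hb HA HB. destruct (Rtotal_order a b) as [H | [H | H]]; [| exact H |].
  - pose proof (gap_decr x m a b ltac:(lra) H ltac:(lra)). lra.
  - pose proof (gap_decr x m b a ltac:(lra) H ltac:(lra)). lra.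
Qed.

Lemma lt_gap_root (x m : nat) (tau c : R) : 0 < tau < 1 -> 0 < c < 1 ->
  gap x m tau = 0 -> 0 < gap x m c -> c < tau.
Proof.
  intros Ht Hc H0 Hpos. apply Rnot_le_lt. intros [H | <-]; [|lra].
  pose proof (gap_decr x m tau c ltac:(lra) H ltac:(lra)). lra.
Qed.

Lemma gt_gap_root (x m : nat) (tau c : R) : 0 < tau < 1 -> 0 < c < 1 ->
  gap x m tau = 0 -> gap x m c < 0 -> tau < c.
Proof.
  intros Ht Hc H0 Hneg. apply Rnot_le_lt. intros [H | ->]; [|lra].
  pose proof (gap_decr x m c tau ltac:(lra) H ltac:(lra)). lra.
Qed.

Theorem theorem3 (n x : nat) (tau : R) :
  (1 <= n)%nat -> (x <= n)%nat ->
  0 < tau < 1 -> g n x tau = tau ->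
  (J n x tau = 0 /\ (forall a, 0 < a < 1 -> J n x a = 0 -> a = tau)) /\
  (INR (x + 1) / INR (n + 3) < tau < INR (x + 2) / INR (n + 3)) /\
  (INR x < INR n / 2 -> INR (x + 1) / INR (n + 2) < tau < INR (x + 2) / INR (n + 3)) /\
  (INR x > INR n / 2 -> INR (x + 1) / INR (n + 3) < tau < INR (x + 1) / INR (n + 2)).
Proof.
  intros Hn Hx Ht Hg.
  destruct (Nat.le_exists_sub x n Hx) as [m [-> _]].
  replace (m + x)%nat with (x + m)%nat in * by lia.
  apply g_fixed_iff in Hg; [|exact Ht].
  assert (Hlower : INR (x + 1) / INR (x + m + 3) < tau).
  { apply (lt_gap_root x m); [exact Ht | apply ratio_in_01; lia | exact Hg | apply gap_pos_lower]. }
  assert (Hupper : tau < INR (x + 2) / INR (x + m + 3)).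
  { apply (gt_gap_root x m); [exact Ht | apply ratio_in_01; lia | exact Hg | apply gap_neg_upper]. }
  destruct (gap_mode_sign x m) as [Hmode_pos Hmode_neg].
  split; [split | split; [split; assumption | split]].
  - rewrite J_eq_gap, Hg by exact Ht. ring.
  - intros a Ha HJ. rewrite J_eq_gap in HJ by exact Ha.
    pose proof (J_scale_pos x m).
    apply (gap_root_unique x m); [exact Ha | exact Ht | | exact Hg].
    apply Rmult_integral in HJ as [HJ | HJ]; [nra | exact HJ].
  - intros Hxm. split; [|exact Hupper].
    apply (lt_gap_root x m); [exact Ht | apply ratio_in_01; lia | exact Hg |].
    apply Hmode_pos, INR_lt. rewrite plus_INR in Hxm. lra.
  - intros Hxm. split; [exact Hlower|].
    apply (gt_gap_root x m); [exact Ht | apply ratio_in_01; lia | exact Hg |].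
    apply Hmode_neg, INR_lt. rewrite plus_INR in Hxm. lra.
Qed.
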